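(* Let $n$ be even, and for $m\ge1$ let $\mathcal{C}_m=\mathbb{C}\{e_1,\dots,e_m\}$ denote the complex Clifford algebra with generators satisfying $e_j^2=-1$, $e_je_k=-e_ke_j$ ($j\ne k$), of dimension $2^m$, with $\mathcal{C}_n\subset\mathcal{C}_{n+1}$ naturally. Suppose there is an invertible $2^{n/2}\times2^{n/2}$ matrix $P_n$ over $\mathcal{C}_n$, not depending on $a$, such that for every $a\in\mathcal{C}_n$ the matrix $\phi_n(a):=P_n(aI_{2^{n/2}})P_n^{-1}$ has all entries in $\mathbb{C}$. Let $e_{[n+1]}=e_1e_2\cdots e_{n+1}$ and $r=(-1)^{\frac12(n+1)(n+2)}$, so that $e_{[n+1]}^2=r$, and fix a square root $\sqrt r\in\mathbb{C}$. Then every $a\in\mathcal{C}_{n+1}$ can be written as $a=a_0+a_1e_{[n+1]}=a_0+e_{[n+1]}a_1$ with $a_0,a_1\in\mathcal{C}_n$. Define $\overline{a}=a_0-a_1e_{[n+1]}$ and $D_a=\mathrm{diag}(aI_{2^{n/2}},\overline{a}I_{2^{n/2}})$. Let $$P_{n+1}=\frac12\begin{pmatrix}(1+\frac{1}{\sqrt r}e_{[n+1]})P_n & -(\sqrt r-e_{[n+1]})P_n\\ \frac1r(\sqrt r-e_{[n+1]})P_n & (1+\frac{1}{\sqrt r}e_{[n+1]})P_n\end{pmatrix},$$ $$P_{n+1}'=\frac12\begin{pmatrix}P_n^{-1}(1+\frac{1}{\sqrt r}e_{[n+1]}) & P_n^{-1}(\sqrt r-e_{[n+1]})\\ -P_n^{-1}\frac1r(\sqrt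 r-e_{[n+1]}) & P_n^{-1}(1+\frac1{\sqrt r}e_{[n+1]})\end{pmatrix}.$$ Then $P_{n+1}$ is invertible with $P_{n+1}^{-1}=P_{n+1}'$, and $$P_{n+1}D_aP_{n+1}^{-1}=\begin{pmatrix}\phi_n(a_0)+\sqrt r\,\phi_n(a_1) & 0\\ 0 & \phi_n(a_0)-\sqrt r\,\phi_n(a_1)\end{pmatrix},$$ a block diagonal matrix with two $2^{n/2}\times2^{n/2}$ complex blocks.
   Context: For an element $c$ and a matrix $M$, $cM$ (resp. $Mc$) denotes the matrix with entries $cM_{jk}$ (resp. $M_{jk}c$). Complex scalars commute with all Clifford elements. *)

From HB Require Import structures.
From mathcomp Require Import all_boot all_order all_algebra.
From mathcomp Require Export complex.
From mathcomp Require Export reals.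
Set Implicit Arguments. Unset Strict Implicit. Unset Printing Implicit Defensive.
Import Order.TTheory GRing.Theory Num.Theory.
Local Open Scope ring_scope.

(* The Clifford algebra K{e_1,...,e_m} with e_j^2 = -1, e_j e_k = -e_k e_j,
   realised concretely as K-valued functions on subsets of {1..m}
   (index j-1 : 'I_m stands for the generator e_j).  The element
   [clif_blade S] is the basis monomial e_{s_1} e_{s_2} ... e_{s_k}
   with s_1 < ... < s_k the elements of S; dimension 2^m.            *)
Notation clif K m := ({ffun {set 'I_m} -> K}) (only parsing).

Section Clifford.
Variable K : comNzRingType.
Variable m : nat.
Local Notation clif := (clif K m).

Definition clif_blade (S : {set 'I_m}) : clif := [ffun T => (T == S)%:R].

(* sign of e_A e_B = clif_blade_sign A B * e_{A symdiff B}: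
   one transposition for each pair (a in A, b in B, b < a),
   and a factor e_j^2 = -1 for each common index. *)
Definition clif_blade_sign (A B : {set 'I_m}) : K :=
  (-1) ^+ (#|[set p : 'I_m * 'I_m | [&& p.1 \in A, p.2 \in B & (p.2 < p.1)%N]]|
           + #|A :&: B|).

Definition clif_symdiff (A B : {set 'I_m}) : {set 'I_m} := (A :\: B) :|: (B :\: A).

Definition cmul (x y : clif) : clif :=
  [ffun S => \sum_(A : {set 'I_m}) \sum_(B : {set 'I_m} | clif_symdiff A B == S)
                clif_blade_sign A B * x A * y B].

Definition cone : clif := clif_blade set0.

Definition cscal (c : K) : clif := [ffun T => if T == set0 then c else 0].

Definition cgen (i : 'I_m) : clif := clif_blade [set i].

Definition is_scalar (x : clif) : Prop := exists c : K, x = cscal c.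

Definition cmxmul p q r (A : 'M[clif]_(p, q)) (B : 'M[clif]_(q, r)) : 'M[clif]_(p, r) :=
  \matrix_(i, j) \sum_(k < q) cmul (A i k) (B k j).

Definition cmxscalar p (a : clif) : 'M[clif]_p :=
  \matrix_(i, j) if i == j then a else 0.

Definition cmxlmul p q (c : clif) (M : 'M[clif]_(p, q)) : 'M[clif]_(p, q) :=
  \matrix_(i, j) cmul c (M i j).
Definition cmxrmul p q (M : 'M[clif]_(p, q)) (c : clif) : 'M[clif]_(p, q) :=
  \matrix_(i, j) cmul (M i j) c.

End Clifford.

(* C_n inside C_{n+1}: elements with no component on monomials involving
   e_{n+1} (index ord_max). *)
Definition in_clif_sub (K : comNzRingType) (n : nat) (x : clif K n.+1) : Prop :=
  forall S : {set 'I_n.+1}, ord_max \in S -> x S = 0.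

Definition clif_top (K : comNzRingType) (m : nat) : clif K m :=
  \big[@cmul K m/cone K m]_(i < m) cgen K i.

From HB Require Import structures.
From mathcomp Require Import all_boot all_order all_algebra.
From mathcomp Require Import complex reals.
From mathcomp Require Import ring.
Import Order.TTheory GRing.Theory Num.Theory.
Set Implicit Arguments. Unset Strict Implicit. Unset Printing Implicit Defensive.
Local Open Scope ring_scope.

(** Because n is even, e := e_[n+1] is central, and e^2 = r = s^2.  In the
    commutative subalgebra C[e] the elements (1 + e/s)/2 and (1 - e/s)/2 are
    complementary orthogonal idempotents on which e acts by s and -s, and the
    blocks of P_(n+1) are built from them: P_(n+1) = S diag(P_n, P_n) and
    P_(n+1)' = diag(P_n^-1, P_n^-1) S' for 2x2 block matrices S, S' with entries
    in C[e].  Then S S' = S' S = 1 and S diag(e, -e) S' = diag(s, -s), while S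
    commutes with every diag(X, X).  Writing
    diag(a, abar) = diag(a0, a0) + diag(a1, a1) diag(e, -e), conjugation by
    P_(n+1) therefore reduces to conjugation of a0 and a1 by P_n. *)

Section Central.
Variable R : pzRingType.

Definition central (c : R) := forall x, GRing.comm c x.

Lemma central0 : central 0.
Proof. by move=> x; rewrite /GRing.comm mul0r mulr0. Qed.

Lemma centralN c : central c -> central (- c).
Proof. by move=> cC x; rewrite /GRing.comm mulNr mulrN cC. Qed.

End Central.

Section ScalarBlocks.
Variables (R : pzRingType) (p : nat).
Implicit Types (a b c d : R) (X Y : 'M[R]_p).

Definition scalar_block a b c d : 'M[R]_(p + p) := block_mx a%:M b%:M c%:M d%:M.

Definition diag_block X : 'M[R]_(p + p) := block_mx X 0 0 X.

Lemma scalar_blockM a b c d a' b' c' d' :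
  scalar_block a b c d *m scalar_block a' b' c' d'
  = scalar_block (a * a' + b * c') (a * b' + b * d') (c * a' + d * c') (c * b' + d * d').
Proof. by rewrite mulmx_block -!scalar_mxM -!raddfD. Qed.

Lemma scalar_block1 : scalar_block 1 0 0 1 = 1%:M.
Proof. by rewrite /scalar_block raddf0 -scalar_mx_block. Qed.

Lemma diag_blockM X Y : diag_block X *m diag_block Y = diag_block (X *m Y).
Proof. by rewrite mulmx_block !mulmx0 !mul0mx !addr0 !add0r. Qed.

Lemma diag_block_scalar a : diag_block a%:M = a%:M.
Proof. by rewrite /diag_block -scalar_mx_block. Qed.

Lemma scalar_mx_central q c (M : 'M[R]_(p, q)) : central c -> c%:M *m M = M *m c%:M.
Proof.
move=> cC; apply/matrixP => i j; rewrite !mxE (bigD1 i) //= big1 => [|k /negbTE nki].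
  rewrite (bigD1 j) //= [X in _ = _ + X]big1 => [|k /negbTE nkj].
    by rewrite !mxE !eqxx !mulr1n cC !addr0.
  by rewrite !mxE nkj mulr0n mulr0.
by rewrite !mxE eq_sym nki mulr0n mul0r.
Qed.

Lemma scalar_block_diag_blockC a b c d X :
  central a -> central b -> central c -> central d ->
  scalar_block a b c d *m diag_block X = diag_block X *m scalar_block a b c d.
Proof.
move=> ca cb cc cd; rewrite !mulmx_block !mulmx0 !mul0mx !addr0 !add0r.
by rewrite !scalar_mx_central.
Qed.

Lemma scale_block_mulmx h a b c d X :
  h *: block_mx (a *: X) (b *: X) (c *: X) (d *: X)
  = scalar_block (h * a) (h * b) (h * c) (h * d) *m diag_block X.
Proof.
rewrite scale_block_mx !scalerA mulmx_block !mulmx0 !addr0 !add0r.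
by rewrite !mul_scalar_mx.
Qed.

Lemma scale_block_mulmxr h a b c d X : central h ->
  h *: block_mx (X *m a%:M) (X *m b%:M) (X *m c%:M) (X *m d%:M)
  = diag_block X *m scalar_block (h * a) (h * b) (h * c) (h * d).
Proof.
move=> cH; rewrite scale_block_mx mulmx_block !mul0mx !addr0 !add0r.
by rewrite -!mul_scalar_mx !mulmxA scalar_mx_central // -!mulmxA -!scalar_mxM.
Qed.

Lemma conj_diag_blockK (S S' : 'M[R]_(p + p)) P Q :
  S *m S' = 1%:M -> P *m Q = 1%:M -> S *m diag_block P *m (diag_block Q *m S') = 1%:M.
Proof.
move=> SS' PQ; rewrite -mulmxA (mulmxA (diag_block P)) diag_blockM PQ.
by rewrite diag_block_scalar mul1mx.
Qed.

Lemma conj_diag_blockKV (S S' : 'M[R]_(p + p)) P Q :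
  S' *m S = 1%:M -> Q *m P = 1%:M -> diag_block Q *m S' *m (S *m diag_block P) = 1%:M.
Proof.
move=> S'S QP; rewrite -mulmxA (mulmxA S') S'S mul1mx diag_blockM QP.
exact: diag_block_scalar.
Qed.

Lemma conj_diag_blockE (S S' : 'M[R]_(p + p)) (P Q : 'M[R]_p) a0 a1 e t :
  (forall X, S *m diag_block X = diag_block X *m S) -> central e -> central t ->
  S *m S' = 1%:M -> S *m scalar_block e 0 0 (- e) *m S' = scalar_block t 0 0 (- t) ->
  S *m diag_block P *m block_mx (a0 + a1 * e)%:M 0 0 (a0 - a1 * e)%:M *m (diag_block Q *m S')
  = block_mx (P *m a0%:M *m Q + t *: (P *m a1%:M *m Q)) 0
             0 (P *m a0%:M *m Q - t *: (P *m a1%:M *m Q)).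
Proof.
move=> SC cE cT SS' SeS'.
set X0 := P *m a0%:M *m Q; set X1 := P *m a1%:M *m Q; set Eb := scalar_block e 0 0 (- e).
have D_split : block_mx (a0 + a1 * e)%:M 0 0 (a0 - a1 * e)%:M
               = diag_block a0%:M + diag_block a1%:M *m Eb.
  rewrite /Eb /diag_block /scalar_block mulmx_block raddf0 !mulmx0 !mul0mx !addr0 !add0r.
  by rewrite add_block_mx !addr0 -!scalar_mxM mulrN !raddfD.
have EbC : Eb *m diag_block Q = diag_block Q *m Eb.
  exact: (scalar_block_diag_blockC _ cE (@central0 R) (@central0 R) (centralN cE)).
have inner : diag_block P *m block_mx (a0 + a1 * e)%:M 0 0 (a0 - a1 * e)%:M *m diag_block Q
             = diag_block X0 + diag_block X1 *m Eb.
  rewrite D_split mulmxDr mulmxDl !mulmxA !diag_blockM.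
  by rewrite -[diag_block _ *m Eb *m _]mulmxA EbC mulmxA diag_blockM.
rewrite mulmxA -(mulmxA S) -(mulmxA S) inner mulmxDr mulmxDl SC -mulmxA SS' mulmx1.
rewrite mulmxA SC -(mulmxA (diag_block X1)) -(mulmxA (diag_block X1)) SeS'.
rewrite /diag_block /scalar_block mulmx_block raddf0 !mulmx0 !mul0mx !addr0.
rewrite add_block_mx !addr0 !add0r -(scalar_mx_central _ cT).
by rewrite -(scalar_mx_central _ (centralN cT)) !mul_scalar_mx scaleNr.
Qed.

End ScalarBlocks.

Section QuadraticSubalgebra.
Variables (F : fieldType) (A : algType F) (e : A) (s : F).
Hypotheses (e_central : central e) (e_sqr : e * e = (s ^+ 2)%:A).

(* The subalgebra F[e] is quadratic over F; its products are computed by quadM,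
   which turns identities between its elements into identities in F. *)
Definition quad (a b : F) : A := a%:A + b *: e.

Lemma quadD a b c d : quad a b + quad c d = quad (a + c) (b + d).
Proof. by rewrite /quad addrACA !scalerDl. Qed.

Lemma quadN a b : - quad a b = quad (- a) (- b).
Proof. by rewrite /quad opprD -!scaleNr. Qed.

Lemma quadM a b c d : quad a b * quad c d = quad (a * c + b * d * s ^+ 2) (a * d + b * c).
Proof.
rewrite /quad mulrDl mulr_algl -scalerAl mulrDr mulr_algr -scalerAr e_sqr.
rewrite !scalerDr !scalerA !scalerDl -!addrA; congr (_ + _).
by rewrite addrA addrC.
Qed.

Lemma quad_central a b : central (quad a b).
Proof.
move=> x; rewrite /GRing.comm /quad mulrDl mulrDr mulr_algl mulr_algr.
by rewrite -scalerAl -scalerAr e_central.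
Qed.

Lemma quad_alg a : a%:A = quad a 0.
Proof. by rewrite /quad scale0r addr0. Qed.

Lemma quad1 : 1 = quad 1 0.
Proof. by rewrite -quad_alg scale1r. Qed.

Lemma quad0 : 0 = quad 0 0.
Proof. by rewrite -quad_alg scale0r. Qed.

Lemma quad_e : e = quad 0 1.
Proof. by rewrite /quad scale0r add0r scale1r. Qed.

Variable p : nat.
Hypotheses (s_neq0 : s != 0) (two_neq0 : 2 != 0 :> F).

Let u : A := 1 + s^-1%:A * e.
Let v : A := s%:A - e.
Let w : A := (s ^+ 2)^-1%:A * v.
Let h : A := 2^-1%:A.

Definition split_block : 'M[A]_(p + p) := scalar_block p (h * u) (h * - v) (h * w) (h * u).
Definition split_block_inv : 'M[A]_(p + p) := scalar_block p (h * u) (h * v) (h * - w) (h * u).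

Lemma split_blockK : split_block *m split_block_inv = 1%:M.
Proof.
rewrite scalar_blockM -scalar_block1 /h /w /u /v !quad_alg quad_e quad1 quad0.
rewrite !(quadM, quadN, quadD).
by congr scalar_block; congr quad; field; rewrite s_neq0 two_neq0.
Qed.

Lemma split_block_invK : split_block_inv *m split_block = 1%:M.
Proof.
rewrite scalar_blockM -scalar_block1 /h /w /u /v !quad_alg quad_e quad1 quad0.
rewrite !(quadM, quadN, quadD).
by congr scalar_block; congr quad; field; rewrite s_neq0 two_neq0.
Qed.

Lemma split_block_diagonalizes :
  split_block *m scalar_block p e 0 0 (- e) *m split_block_inv
  = scalar_block p s%:A 0 0 (- s%:A).
Proof.
rewrite !scalar_blockM /h /w /u /v !quad_alg quad_e quad1 quad0.
rewrite !(quadM, quadN, quadD).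
by congr scalar_block; congr quad; field; rewrite s_neq0 two_neq0.
Qed.

Lemma split_block_diag_blockC X : split_block *m diag_block X = diag_block X *m split_block.
Proof.
by apply: scalar_block_diag_blockC; rewrite /h /w /u /v !quad_alg quad_e ?quad1
  !(quadM, quadN, quadD); apply: quad_central.
Qed.

End QuadraticSubalgebra.

(* {ffun _ -> K} already carries the pointwise ring structure of finfun; the
   alias is what lets the Clifford product be installed as the multiplication. *)
Definition clifford (K : comNzRingType) (m : nat) := {ffun {set 'I_m} -> K}.
HB.instance Definition _ K m := GRing.Zmodule.on (clifford K m).

Section CliffordModule.
Variables (K : comNzRingType) (m : nat).
Local Notation Cl := (clifford K m).

Definition clif_scale (k : K) (x : Cl) : Cl := [ffun S => k * x S].

Fact clif_scaleA a b (x : Cl) : clif_scale a (clif_scale b x) = clif_scale (a * b) x.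
Proof. by apply/ffunP => S; rewrite !ffunE mulrA. Qed.

Fact clif_scale1 : left_id 1 clif_scale.
Proof. by move=> x; apply/ffunP => S; rewrite !ffunE mul1r. Qed.

Fact clif_scaleDr : right_distributive clif_scale +%R.
Proof. by move=> k x y; apply/ffunP => S; rewrite !ffunE mulrDr. Qed.

Fact clif_scaleDl (x : Cl) : {morph clif_scale^~ x : a b / a + b}.
Proof. by move=> a b; apply/ffunP => S; rewrite !ffunE mulrDl. Qed.

HB.instance Definition _ := GRing.Zmodule_isLmodule.Build K Cl
  clif_scaleA clif_scale1 clif_scaleDr clif_scaleDl.

Lemma clif_scaleE (k : K) (x : Cl) S : (k *: x) S = k * x S.
Proof. by rewrite ffunE. Qed.

End CliffordModule.

Lemma prod_sign_card (R : pzRingType) (T : finType) (P : pred T) :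
  \prod_(x : T) (-1) ^+ P x = (-1) ^+ #|P| :> R.
Proof.
rewrite -prodr_const [RHS]big_mkcond /=.
by apply: eq_bigr => x _; rewrite unfold_in; case: (P x).
Qed.

Section CliffordProduct.
Variables (K : comNzRingType) (m : nat).
Implicit Types (A B C S : {set 'I_m}).
Local Notation Cl := (clifford K m).
Local Notation sd := (@clif_symdiff m).
Local Notation sign := (@clif_blade_sign K m).
Local Notation blade := (@clif_blade K m).
Local Notation "x ** y" := (@cmul K m x y : Cl) (at level 40).

Lemma in_clif_symdiff A B i : (i \in sd A B) = (i \in A) (+) (i \in B).
Proof. by rewrite !inE; case: (i \in A); case: (i \in B). Qed.

Lemma clif_symdiffA A B C : sd (sd A B) C = sd A (sd B C).
Proof. by apply/setP => i; rewrite !in_clif_symdiff addbA. Qed.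

Lemma clif_symdiffC A B : sd A B = sd B A.
Proof. by apply/setP => i; rewrite !in_clif_symdiff addbC. Qed.

Lemma clif_symdiff0 A : sd A set0 = A.
Proof. by apply/setP => i; rewrite in_clif_symdiff inE addbF. Qed.

Lemma clif_symdiffK A B : sd (sd A B) B = A.
Proof. by apply/setP => i; rewrite !in_clif_symdiff -addbA addbb addbF. Qed.

Lemma clif_symdiffvv A : sd A A = set0.
Proof. by apply/setP => i; rewrite in_clif_symdiff addbb inE. Qed.

(* Of the pairs (a, b) in A x B with b <= a, those with b < a count the
   transpositions and those with b = a the squares e_j^2 = -1.  In this form the
   sign is multiplicative in each argument with respect to symmetric difference. *)
Lemma clif_blade_signE A B :
  sign A B = \prod_(p : 'I_m * 'I_m) (-1) ^+ [&& p.1 \in A, p.2 \in B & (p.2 <= p.1)%N].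
Proof.
have split_le (p : 'I_m * 'I_m) :
    [&& p.1 \in A, p.2 \in B & (p.2 <= p.1)%N]
    = [&& p.1 \in A, p.2 \in B & (p.2 < p.1)%N] (+) [&& p.1 \in A, p.2 \in B & p.2 == p.1].
  by case: (p.1 \in A) (p.2 \in B) => [] [] //=; rewrite leq_eqVlt -val_eqE;
     case: ltngtP.
under eq_bigr do rewrite split_le signr_addb.
rewrite big_split /= /clif_blade_sign exprD prod_sign_card; congr (_ ^+ _ * _).
  by apply: eq_card => p; rewrite inE.
rewrite -(pair_bigA _ (fun i j => (-1) ^+ [&& i \in A, j \in B & j == i])) /=.
rewrite -prod_sign_card; apply: eq_bigr => i _.
rewrite (bigD1 i) //= big1 ?mulr1 => [|j /negbTE ->]; last by rewrite !andbF.
by rewrite eqxx andbT -in_setI.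
Qed.

Lemma clif_blade_sign_symdiffl A B C : sign (sd A B) C = sign A C * sign B C.
Proof.
rewrite !clif_blade_signE -big_split; apply: eq_bigr => p _.
rewrite /= in_clif_symdiff -signr_addb; congr (_ ^+ _).
by move: (p.1 \in A) (p.1 \in B) (p.2 \in C) (p.2 <= p.1)%N => [] [] [] [].
Qed.

Lemma clif_blade_sign_symdiffr A B C : sign A (sd B C) = sign A B * sign A C.
Proof.
rewrite !clif_blade_signE -big_split; apply: eq_bigr => p _.
rewrite /= in_clif_symdiff -signr_addb; congr (_ ^+ _).
by move: (p.1 \in A) (p.2 \in B) (p.2 \in C) (p.2 <= p.1)%N => [] [] [] [].
Qed.

Lemma clif_blade_sign_sqr A B : sign A B * sign A B = 1.
Proof. by rewrite -expr2 -exprM mulnC exprM sqrrN expr1n expr1n. Qed.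

Lemma clif_blade_sign0l A : sign set0 A = 1.
Proof. by rewrite clif_blade_signE big1 // => p _; rewrite inE. Qed.

Lemma clif_blade_sign0r A : sign A set0 = 1.
Proof. by rewrite clif_blade_signE big1 // => p _; rewrite inE andbF. Qed.

Lemma clif_bladeE A S : blade A S = (S == A)%:R.
Proof. by rewrite ffunE. Qed.

Lemma clif_expand (x : Cl) : x = \sum_A x A *: (blade A : Cl).
Proof.
apply/ffunP => S; rewrite sum_ffunE (bigD1 S) //= big1 => [|A /negbTE nAS].
  by rewrite clif_scaleE clif_bladeE eqxx mulr1 addr0.
by rewrite clif_scaleE clif_bladeE eq_sym nAS mulr0.
Qed.

Lemma clif_linear_ext (f g : Cl -> Cl) : linear f -> linear g ->
  (forall A, f (blade A) = g (blade A)) -> f =1 g.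
Proof.
have lin0 (h : Cl -> Cl) : linear h -> h 0 = 0.
  by move=> hL; rewrite -(subrr (0 : Cl)) (zmod_morphism_linear hL) !subrr.
move=> fL gL fg x; rewrite (clif_expand x).
elim/big_rec: _ => [|A y _ IH]; first by rewrite !lin0.
by rewrite fL gL fg IH.
Qed.

Lemma cmulDl (x1 x2 y : Cl) : (x1 + x2) ** y = x1 ** y + x2 ** y.
Proof.
apply/ffunP => S; rewrite !ffunE -big_split; apply: eq_bigr => A _.
by rewrite -big_split; apply: eq_bigr => B _; rewrite /= !ffunE mulrDr mulrDl.
Qed.

Lemma cmulDr (x y1 y2 : Cl) : x ** (y1 + y2) = x ** y1 + x ** y2.
Proof.
apply/ffunP => S; rewrite !ffunE -big_split; apply: eq_bigr => A _.
by rewrite -big_split; apply: eq_bigr => B _; rewrite /= !ffunE mulrDr.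
Qed.

Lemma cmulZl k (x y : Cl) : (k *: x) ** y = k *: (x ** y).
Proof.
apply/ffunP => S; rewrite clif_scaleE !ffunE mulr_sumr; apply: eq_bigr => A _.
by rewrite mulr_sumr; apply: eq_bigr => B _; rewrite clif_scaleE; ring.
Qed.

Lemma cmulZr k (x y : Cl) : x ** (k *: y) = k *: (x ** y).
Proof.
apply/ffunP => S; rewrite clif_scaleE !ffunE mulr_sumr; apply: eq_bigr => A _.
by rewrite mulr_sumr; apply: eq_bigr => B _; rewrite clif_scaleE; ring.
Qed.

Lemma cmul_blade_r (x : Cl) C S : (x ** blade C) S = sign (sd S C) C * x (sd S C).
Proof.
rewrite ffunE (bigD1 (sd S C)) //= [X in _ + X]big1 => [|A nAC]; last first.
  rewrite big1 // => B /eqP sdAB; rewrite clif_bladeE.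
  case: eqP => [eBC|]; last by rewrite mulr0.
  by rewrite -sdAB eBC clif_symdiffK eqxx in nAC.
rewrite (bigD1 C) ?clif_symdiffK //= big1 => [|B /andP[_ /negbTE nBC]].
  by rewrite clif_bladeE eqxx mulr1 !addr0.
by rewrite clif_bladeE nBC mulr0.
Qed.

Lemma cmul_blades A B : blade A ** blade B = sign A B *: (blade (sd A B) : Cl).
Proof.
apply/ffunP => S; rewrite cmul_blade_r clif_scaleE !clif_bladeE.
have [->|nSAB] := eqVneq S (sd A B); first by rewrite clif_symdiffK eqxx.
rewrite (_ : sd S B == A = false) ?mulr0 //.
by apply: contraNF nSAB => /eqP <-; rewrite clif_symdiffK.
Qed.

(* On blades, associativity is the cocycle identity of the sign, which holds
   because the sign is multiplicative in each argument. *)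
Lemma cmulA (x y z : Cl) : (x ** y) ** z = x ** (y ** z).
Proof.
move: x; apply: clif_linear_ext => [k x1 x2 | k x1 x2 | A] /=.
  1,2: by rewrite !(cmulDl, cmulZl).
move: y; apply: clif_linear_ext => [k y1 y2 | k y1 y2 | B] /=.
  1,2: by rewrite !(cmulDl, cmulDr, cmulZl, cmulZr).
move: z; apply: clif_linear_ext => [k z1 z2 | k z1 z2 | C] /=.
  1,2: by rewrite !(cmulDr, cmulZr).
rewrite !cmul_blades cmulZl cmulZr !cmul_blades !scalerA clif_symdiffA.
by rewrite clif_blade_sign_symdiffl clif_blade_sign_symdiffr; congr (_ *: _); ring.
Qed.

Lemma cmul1l (x : Cl) : cone K m ** x = x.
Proof.
move: x; apply: (@clif_linear_ext _ id) => [k x1 x2 | // | A] /=.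
  by rewrite cmulDr cmulZr.
by rewrite cmul_blades clif_blade_sign0l clif_symdiffC clif_symdiff0 scale1r.
Qed.

Lemma cmul1r (x : Cl) : x ** cone K m = x.
Proof.
move: x; apply: (@clif_linear_ext _ id) => [k x1 x2 | // | A] /=.
  by rewrite cmulDl cmulZl.
by rewrite cmul_blades clif_blade_sign0r clif_symdiff0 scale1r.
Qed.

End CliffordProduct.

Section CliffordAlgebra.
Variables (K : comNzRingType) (m : nat).
Local Notation Cl := (clifford K m).

Fact clifford_mulA : associative (@cmul K m : Cl -> Cl -> Cl).
Proof. by move=> x y z; rewrite cmulA. Qed.

Fact clifford_one_neq0 : cone K m != 0 :> Cl.
Proof. by apply/eqP => /ffunP/(_ set0); rewrite !ffunE eqxx; apply/eqP/oner_neq0. Qed.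

HB.instance Definition _ := GRing.Zmodule_isNzRing.Build Cl
  clifford_mulA (@cmul1l K m) (@cmul1r K m) (@cmulDl K m) (@cmulDr K m)
  clifford_one_neq0.

Lemma clifford_oneE : cone K m = 1 :> Cl.
Proof. by []. Qed.

Lemma clifford_mulE (x y : Cl) : x * y = cmul x y.
Proof. by []. Qed.

Fact clifford_scalerAl k (x y : Cl) : k *: (x * y) = k *: x * y.
Proof. by rewrite !clifford_mulE cmulZl. Qed.

HB.instance Definition _ := GRing.Lmodule_isLalgebra.Build _ Cl clifford_scalerAl.

Fact clifford_scalerAr k (x y : Cl) : k *: (x * y) = x * (k *: y).
Proof. by rewrite !clifford_mulE cmulZr. Qed.

HB.instance Definition _ := GRing.Lalgebra_isAlgebra.Build K Cl clifford_scalerAr.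

Lemma cscal_alg (c : K) : cscal m c = c%:A :> Cl.
Proof.
by apply/ffunP => S; rewrite clif_scaleE !ffunE; case: (S == set0); rewrite ?mulr1 ?mulr0.
Qed.

End CliffordAlgebra.

Section Pseudoscalar.
Variables (K : comNzRingType) (n : nat).
Local Notation m := n.+1.
Implicit Types (A B S : {set 'I_m}).
Local Notation Cl := (clifford K m).
Local Notation sd := (@clif_symdiff m).
Local Notation sign := (@clif_blade_sign K m).
Local Notation blade := (@clif_blade K m).
Local Notation E := (clif_top K m : Cl).

Lemma clif_bladeM A B : (blade A : Cl) * blade B = sign A B *: (blade (sd A B) : Cl).
Proof. exact: cmul_blades. Qed.

Lemma clif_top_blade : E = blade setT.
Proof.
have prefix k : (k <= m)%N ->
    \prod_(0 <= i < k) (cgen K (inord i) : Cl) = blade [set j : 'I_m | (j < k)%N].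
  elim: k => [_|k IH lt_k_m].
    have -> : [set j : 'I_m | (j < 0)%N] = set0 by apply/setP => j; rewrite !inE.
    rewrite big_geq //.
  rewrite big_nat_recr //= IH; last exact: ltnW.
  rewrite /cgen clif_bladeM.
  have -> : sign [set j : 'I_m | (j < k)%N] [set inord k] = 1.
    rewrite clif_blade_signE big1 // => -[i j] _; rewrite !inE /=.
    have [-> /=|] := eqVneq j (inord k); last by rewrite andbF.
    by rewrite inordK //; case: ltnP => // lt_i_k; rewrite leqNgt lt_i_k.
  rewrite scale1r; congr blade; apply/setP => j.
  by rewrite in_clif_symdiff !inE -val_eqE /= inordK // ltnS; case: ltngtP.
have -> : E = \prod_(i < m) (cgen K i : Cl) by reflexivity.
rewrite (eq_bigr (fun i : 'I_m => cgen K (inord i) : Cl)) => [|i _]; last by rewrite inord_val.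
rewrite -(big_mkord xpredT (fun i => cgen K (inord i) : Cl)) prefix //.
by congr blade; apply/setP => j; rewrite !inE ltn_ord.
Qed.
Lemma clif_blade_sign_setT : sign setT setT = (-1) ^+ (m * m.+1)./2.
Proof.
have row (i : 'I_m) : \prod_(j : 'I_m) (-1) ^+ (j <= i)%N = (-1) ^+ i.+1 :> K.
  rewrite (eq_bigr (fun j : 'I_m => if (j < i.+1)%N then -1 else 1)) => [|j _]; last first.
    by rewrite ltnS; case: leqP.
  by rewrite -big_mkcond /= -(big_ord_widen _ (fun=> -1)) // prodr_const card_ord.
have -> : ((m * m.+1)./2 = \sum_(i < m) i.+1)%N.
  by rewrite mulnC -bin2 -bin2_sum big_mkord big_ord_recl.
rewrite (big_morph _ (exprD _) (expr0 _)) clif_blade_signE.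
rewrite -(pair_bigA _ (fun i j : 'I_m => (-1) ^+ [&& i \in setT, j \in setT & (j <= i)%N])).
by apply: eq_bigr => i _; rewrite -row; apply: eq_bigr => j _; rewrite !in_setT.
Qed.
Lemma clif_blade_sign_setTC (even_n : ~~ odd n) B : sign setT B = sign B setT.
Proof.
have inv : sign setT B * sign B setT = 1.
  rewrite !clif_blade_signE.
  rewrite -(pair_bigA _ (fun i j : 'I_m => (-1) ^+ [&& i \in setT, j \in B & (j <= i)%N])).
  rewrite -(pair_bigA _ (fun i j : 'I_m => (-1) ^+ [&& i \in B, j \in setT & (j <= i)%N])).
  rewrite exchange_big -big_split big1 // => j _; rewrite -big_split /=.
  case: (j \in B); last by apply: big1 => i _; rewrite /= andbF mulr1.
  have sign_ne (i : 'I_m) : (-1) ^+ (j <= i)%N * (-1) ^+ (i <= j)%N = (-1) ^+ (i != j) :> K.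
    by rewrite -signr_addb -val_eqE /=; case: ltngtP.
  under eq_bigr => i _ do rewrite in_setT /= sign_ne.
  by rewrite (prod_sign_card _ (predC1 j)) cardC1 card_ord -signr_odd (negbTE even_n).
by rewrite -[LHS]mulr1 -(clif_blade_sign_sqr K B setT) mulrA inv mul1r.
Qed.
Lemma clif_top_central (even_n : ~~ odd n) (x : Cl) : GRing.comm E x.
Proof.
rewrite /GRing.comm clif_top_blade; move: x.
apply: clif_linear_ext => [k x1 x2 | k x1 x2 | A] /=.
- by rewrite mulrDr scalerAr.
- by rewrite mulrDl scalerAl.
by rewrite !clif_bladeM clif_symdiffC clif_blade_sign_setTC.
Qed.

Lemma clif_top_sqr : E * E = ((-1) ^+ (m * m.+1)./2)%:A.
Proof. by rewrite clif_top_blade clif_bladeM clif_symdiffvv clif_blade_sign_setT. Qed.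

Lemma clif_top_split (even_n : ~~ odd n) (i : 'I_m) (a : Cl) :
  exists a0 a1 : Cl, [/\ forall S, i \in S -> a0 S = 0, forall S, i \in S -> a1 S = 0,
                         a = a0 + a1 * E & a = a0 + E * a1].
Proof.
pose a0 : Cl := [ffun S : {set 'I_m} => if i \in S then 0 else a S].
pose a1 : Cl := [ffun S : {set 'I_m} => if i \in S then 0 else sign S setT * a (sd S setT)].
have a_split : a = a0 + a1 * E.
  apply/ffunP => S; rewrite ffunE clif_top_blade clifford_mulE cmul_blade_r !ffunE.
  rewrite in_clif_symdiff in_setT clif_symdiffK.
  case: (i \in S) => /=; last by rewrite mulr0 addr0.
  by rewrite add0r mulrA clif_blade_sign_sqr mul1r.
exists a0, a1; split => [S iS | S iS | // | ]; rewrite ?ffunE ?iS //.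
by rewrite clif_top_central.
Qed.
End Pseudoscalar.

Section MatrixOperations.
Variables (K : comNzRingType) (m : nat).
Local Notation Cl := (clifford K m).

Lemma cmxmulE p q r (M : 'M[clif K m]_(p, q)) (N : 'M[clif K m]_(q, r)) :
  cmxmul M N = (M : 'M[Cl]_(p, q)) *m N.
Proof. by apply/matrixP => i j; rewrite !mxE. Qed.

Lemma cmxscalarE p (a : Cl) : cmxscalar p a = a%:M.
Proof. by apply/matrixP => i j; rewrite !mxE; case: (i == j). Qed.

Lemma cmxlmulE p q (c : Cl) (M : 'M[clif K m]_(p, q)) :
  cmxlmul c M = c *: (M : 'M[Cl]_(p, q)).
Proof. by apply/matrixP => i j; rewrite !mxE. Qed.

Lemma cmxrmulE p q (c : Cl) (M : 'M[clif K m]_(p, q)) :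
  cmxrmul M c = (M : 'M[Cl]_(p, q)) *m c%:M.
Proof.
apply/matrixP => i j; rewrite !mxE (bigD1 j) //= big1 => [|k /negbTE nkj].
  by rewrite mxE eqxx mulr1n addr0.
by rewrite mxE nkj mulr0n mulr0.
Qed.

End MatrixOperations.

Theorem theorem14 (R : realType) (n : nat) (hn : ~~ odd n)
  (P Q : 'M[clif R[i] n.+1]_(2 ^ n./2))
  (hPsub : forall i j, in_clif_sub (P i j))
  (hQsub : forall i j, in_clif_sub (Q i j))
  (hPQ : cmxmul P Q = cmxscalar _ (cone _ _))
  (hQP : cmxmul Q P = cmxscalar _ (cone _ _))
  (hphi : forall a : clif R[i] n.+1, in_clif_sub a ->
     forall i j, is_scalar (cmxmul (cmxmul P (cmxscalar _ a)) Q i j))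
  (s : R[i]) (hs : s ^+ 2 = (-1) ^+ ((n.+1 * n.+2)./2)) :
  let r : R[i] := (-1) ^+ ((n.+1 * n.+2)./2) in
  let E : clif R[i] n.+1 := clif_top R[i] n.+1 in
  let phi (a : clif R[i] n.+1) := cmxmul (cmxmul P (cmxscalar _ a)) Q in
  let u := cone _ _ + cmul (cscal _ s^-1) E in
  let v := cscal _ s - E in
  let w := cmul (cscal _ r^-1) v in
  let P1 := cmxlmul (cscal _ 2^-1)
              (block_mx (cmxlmul u P) (cmxlmul (- v) P)
                        (cmxlmul w P) (cmxlmul u P)) in
  let P1' := cmxlmul (cscal _ 2^-1)
              (block_mx (cmxrmul Q u) (cmxrmul Q v)
                        (cmxrmul Q (- w)) (cmxrmul Q u)) in
  [/\ cmul E E = cscal _ r,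
      (forall a : clif R[i] n.+1, exists a0 a1 : clif R[i] n.+1,
          [/\ in_clif_sub a0, in_clif_sub a1,
              a = a0 + cmul a1 E & a = a0 + cmul E a1]),
      cmxmul P1 P1' = cmxscalar _ (cone _ _),
      cmxmul P1' P1 = cmxscalar _ (cone _ _) &
      forall a0 a1 : clif R[i] n.+1, in_clif_sub a0 -> in_clif_sub a1 ->
        let a := a0 + cmul a1 E in
        let abar := a0 - cmul a1 E in
        cmxmul (cmxmul P1 (block_mx (cmxscalar _ a) 0 0 (cmxscalar _ abar))) P1'
        = block_mx (phi a0 + cmxlmul (cscal _ s) (phi a1)) 0
                   0 (phi a0 - cmxlmul (cscal _ s) (phi a1))].
Proof.
move=> r E phi u v w P1 P1'.
pose Cl := clifford R[i] n.+1.
have s_neq0 : s != 0.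
  by apply: contra_eqN hs => /eqP ->; rewrite expr0n /= eq_sym signr_eq0.
have two_neq0 : 2 != 0 :> R[i] by rewrite pnatr_eq0.
have E_central : central (E : Cl) := clif_top_central hn.
have E_sqr : (E : Cl) * E = (s ^+ 2)%:A by rewrite clif_top_sqr hs.
rewrite !cmxmulE !cmxscalarE clifford_oneE in hPQ hQP.
have P1E : P1 = split_block (E : Cl) s _ *m diag_block (P : 'M[Cl]_ _).
  rewrite /P1 /u /w /v /r -hs !cmxlmulE !cscal_alg clifford_oneE -!clifford_mulE.
  rewrite scale_block_mulmx; reflexivity.
have P1'E : P1' = diag_block (Q : 'M[Cl]_ _) *m split_block_inv (E : Cl) s _.
  rewrite /P1' /u /w /v /r -hs !cmxrmulE cmxlmulE !cscal_alg clifford_oneE -!clifford_mulE.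
  rewrite scale_block_mulmxr; [reflexivity | exact: comm_alg].
split.
- by rewrite cscal_alg; exact: clif_top_sqr.
- move=> a; have [a0 [a1 [? ? ? ?]]] := clif_top_split hn ord_max a.
  by exists a0, a1.
- rewrite cmxmulE cmxscalarE clifford_oneE P1E P1'E.
  exact: conj_diag_blockK (split_blockK E_sqr _ s_neq0 two_neq0) hPQ.
- rewrite cmxmulE cmxscalarE clifford_oneE P1E P1'E.
  exact: conj_diag_blockKV (split_block_invK E_sqr _ s_neq0 two_neq0) hQP.
move=> a0 a1 _ _ a abar.
rewrite /phi /a /abar !cmxmulE !cmxscalarE !cmxlmulE cscal_alg -clifford_mulE P1E P1'E.
apply: (@conj_diag_blockE Cl _ _ _ (P : 'M[Cl]_ _) Q a0 a1 E s%:A).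
- exact: split_block_diag_blockC.
- exact: E_central.
- exact: comm_alg.
- exact: split_blockK.
exact: split_block_diagonalizes.
Qed.
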